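(* Let $X$ be a compact metric space with metric $d$ and let $f\colon X\to X$ be a continuous map. If $f$ has the $L$-Lipschitz shadowing property for some $0<L<1/2$, then $CR(f)=\overline{Per(f)}$.
   Context: For $\delta>0$, a sequence $(x_i)_{i\ge0}$ in $X$ is a $\delta$-pseudo orbit of $f$ if $d(f(x_i),x_{i+1})\le\delta$ for all $i\ge0$; it is $\epsilon$-shadowed by $x$ if $d(f^i(x),x_i)\le\epsilon$ for all $i\ge0$. For $L>0$, $f$ has the $L$-Lipschitz shadowing property if there is $\delta_0>0$ such that for every $0<\delta\le\delta_0$, every $\delta$-pseudo orbit of $f$ is $L\delta$-shadowed by some point of $X$. A $\delta$-chain is a finite sequence $(x_i)_{i=0}^k$, $k\ge1$, with $d(f(x_i),x_{i+1})\le\delta$ for $0\le i\le k-1$; it is a $\delta$-cycle if $x_0=x_k$. $CR(f)$ is the set of $x\in X$ such that for every $\delta>0$ there is a $\delta$-cycle $(x_i)_{i=0}^k$ with $x_0=x_k=x$. $Per(f)=\bigcup_{i>0}\{x\in X: f^i(x)=x\}$. *)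

From Stdlib Require Import Reals.
Open Scope R_scope.

Definition is_metric {X : Type} (d : X -> X -> R) : Prop :=
  (forall x y, 0 <= d x y) /\
  (forall x y, d x y = 0 <-> x = y) /\
  (forall x y, d x y = d y x) /\
  (forall x y z, d x z <= d x y + d y z).

Definition m_open {X : Type} (d : X -> X -> R) (U : X -> Prop) : Prop :=
  forall x, U x -> exists r, 0 < r /\ forall y, d x y < r -> U y.

Definition m_compact {X : Type} (d : X -> X -> R) : Prop :=
  forall (I : Type) (U : I -> X -> Prop),
    (forall i, m_open d (U i)) ->
    (forall x, exists i, U i x) ->
    exists l : list I, forall x, exists i, List.In i l /\ U i x.

Definition m_continuous {X : Type} (d : X -> X -> R) (f : X -> X) : Prop :=
  forall x eps, 0 < eps -> exists delta, 0 < delta /\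
    forall y, d x y < delta -> d (f x) (f y) < eps.

Definition pseudo_orbit {X : Type} (d : X -> X -> R) (f : X -> X)
  (delta : R) (xs : nat -> X) : Prop :=
  forall i, d (f (xs i)) (xs (S i)) <= delta.

Definition shadows {X : Type} (d : X -> X -> R) (f : X -> X)
  (eps : R) (x : X) (xs : nat -> X) : Prop :=
  forall i, d (Nat.iter i f x) (xs i) <= eps.

Definition lipschitz_shadowing {X : Type} (d : X -> X -> R) (f : X -> X)
  (L : R) : Prop :=
  exists delta0, 0 < delta0 /\
    forall delta, 0 < delta -> delta <= delta0 ->
      forall xs, pseudo_orbit d f delta xs ->
        exists x, shadows d f (L * delta) x xs.

Definition delta_cycle_at {X : Type} (d : X -> X -> R) (f : X -> X)
  (delta : R) (x : X) : Prop :=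
  exists (k : nat) (xs : nat -> X), (1 <= k)%nat /\ xs 0%nat = x /\ xs k = x /\
    forall i, (i < k)%nat -> d (f (xs i)) (xs (S i)) <= delta.

Definition CR {X : Type} (d : X -> X -> R) (f : X -> X) (x : X) : Prop :=
  forall delta, 0 < delta -> delta_cycle_at d f delta x.

Definition Per {X : Type} (f : X -> X) (x : X) : Prop :=
  exists i : nat, (0 < i)%nat /\ Nat.iter i f x = x.

Definition m_closure {X : Type} (d : X -> X -> R) (A : X -> Prop) (x : X) : Prop :=
  forall eps, 0 < eps -> exists y, A y /\ d x y < eps.

From Stdlib Require Import Reals Lra Lia ClassicalEpsilon Classical.
Open Scope R_scope.

(* A delta-cycle of length k through x unrolls into a k-periodic delta-pseudo orbit, and a
   point shadowing it stays within L delta of x and returns within 2 L delta of itself after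
   k steps.  Applying the shadowing property again to the orbit segment of such an almost
   periodic point multiplies the return error by 2L < 1 while moving the point by a
   summable amount; by compactness the points converge to a k-periodic point within
   L delta / (1 - 2L) of x.  Conversely, by continuity, a periodic orbit passing close
   to x closes up into a delta-cycle through x. *)

Lemma pow_eventually_lt (q e : R) :
  0 <= q < 1 -> 0 < e -> exists N, forall n, (N <= n)%nat -> q ^ n < e.
Proof.
  intros Hq He.
  destruct (pow_lt_1_zero q ltac:(rewrite Rabs_right; lra) e He) as [N HN].
  exists N. intros n Hn. specialize (HN n Hn).
  rewrite Rabs_right in HN by (apply Rle_ge, pow_le; lra). exact HN.
Qed.

Lemma dependent_choice_seq {A : Type} (P : nat -> A -> Prop) (Rel : nat -> A -> A -> Prop)
  (a0 : A) :
  P 0%nat a0 ->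
  (forall n a, P n a -> exists a', P (S n) a' /\ Rel n a a') ->
  exists z : nat -> A, z 0%nat = a0 /\ forall n, P n (z n) /\ Rel n (z n) (z (S n)).
Proof.
  intros H0 Hstep.
  destruct (choice (fun (na : nat * A) a' =>
              P (fst na) (snd na) -> P (S (fst na)) a' /\ Rel (fst na) (snd na) a'))
    as [g Hg].
  { intros [n a]. destruct (classic (P n a)) as [Ha|Ha].
    - destruct (Hstep n a Ha) as [a' Ha']. exists a'. intros _. exact Ha'.
    - exists a. intro. contradiction. }
  set (z := fix z n := match n with O => a0 | S n => g (n, z n) end).
  assert (Hz : forall n, P n (z n)).
  { induction n as [|n IH]; [exact H0|]. apply (Hg (n, z n) IH). }
  exists z. split; [reflexivity|]. intro n. split; [apply Hz|]. apply (Hg (n, z n) (Hz n)).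
Qed.

Lemma list_upper_bound {A : Type} (g : A -> nat) (l : list A) :
  exists M, forall a, List.In a l -> (g a <= M)%nat.
Proof.
  induction l as [|a l [M HM]].
  - exists 0%nat. intros a [].
  - exists (Nat.max (g a) M). intros b [->|Hb]; [lia|]. specialize (HM b Hb). lia.
Qed.

Lemma iter_continuous {X : Type} (d : X -> X -> R) (f : X -> X) :
  m_continuous d f -> forall k, m_continuous d (Nat.iter k f).
Proof.
  intros Hf k. induction k as [|k IH]; intros x eps He.
  - exists eps. split; [exact He|]. auto.
  - destruct (Hf (Nat.iter k f x) eps He) as [eta [Heta Hf']].
    destruct (IH x eta Heta) as [dl [Hdl Hi]].
    exists dl. split; [exact Hdl|]. intros y Hy. apply Hf', Hi, Hy.
Qed.

Section Metric.
Context {X : Type} {d : X -> X -> R} (Hd : is_metric d).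

Lemma dist_nonneg x y : 0 <= d x y.
Proof. apply Hd. Qed.

Lemma dist_refl x : d x x = 0.
Proof. apply Hd. reflexivity. Qed.

Lemma dist_sym x y : d x y = d y x.
Proof. apply Hd. Qed.

Lemma dist_triangle x y z : d x z <= d x y + d y z.
Proof. apply Hd. Qed.

Definition cauchy (z : nat -> X) : Prop :=
  forall e, 0 < e -> exists N, forall n m, (N <= n)%nat -> (N <= m)%nat -> d (z n) (z m) < e.

Definition converges (z : nat -> X) (p : X) : Prop :=
  forall e, 0 < e -> exists N, forall n, (N <= n)%nat -> d (z n) p < e.

Lemma geometric_tail_bound (z : nat -> X) (C q : R) :
  0 <= C -> 0 <= q < 1 ->
  (forall n, d (z n) (z (S n)) <= C * q ^ n) ->
  forall n j, d (z n) (z (n + j)%nat) <= C * q ^ n / (1 - q).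
Proof.
  intros HC Hq Hz n j. revert n. induction j as [|j IH]; intros n.
  - rewrite Nat.add_0_r, dist_refl.
    apply Rmult_le_pos; [apply Rmult_le_pos; [lra|apply pow_le; lra]|].
    apply Rlt_le, Rinv_0_lt_compat; lra.
  - replace (n + S j)%nat with (S n + j)%nat by lia.
    eapply Rle_trans; [apply (dist_triangle _ (z (S n)))|].
    eapply Rle_trans; [apply Rplus_le_compat; [apply Hz|apply IH]|].
    simpl. right. field. lra.
Qed.

Lemma geometric_cauchy (z : nat -> X) (C q : R) :
  0 <= C -> 0 <= q < 1 ->
  (forall n, d (z n) (z (S n)) <= C * q ^ n) -> cauchy z.
Proof.
  intros HC Hq Hz e He.
  destruct (pow_eventually_lt q (e * (1 - q) / (C + 1)) Hq) as [N HN].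
  { apply Rdiv_lt_0_compat; nra. }
  assert (Hclose : forall n j, (N <= n)%nat -> d (z n) (z (n + j)%nat) < e).
  { intros n j Hn. specialize (HN n Hn).
    assert (Hsmall : C * q ^ n < e * (1 - q)).
    { apply (Rmult_lt_compat_r (C + 1)) in HN; [|lra].
      unfold Rdiv in HN. rewrite Rmult_assoc, Rinv_l, Rmult_1_r in HN by lra.
      assert (0 <= q ^ n) by (apply pow_le; lra). nra. }
    eapply Rle_lt_trans; [apply (geometric_tail_bound z C q HC Hq Hz)|].
    apply (Rmult_lt_reg_r (1 - q)); [lra|].
    unfold Rdiv. rewrite Rmult_assoc, Rinv_l, Rmult_1_r by lra. exact Hsmall. }
  exists N. intros n m Hn Hm. destruct (Nat.le_ge_cases n m).
  - replace m with (n + (m - n))%nat by lia. apply Hclose, Hn.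
  - rewrite dist_sym. replace n with (m + (n - m))%nat by lia. apply Hclose, Hm.
Qed.

Lemma cauchy_cluster_converges (z : nat -> X) (p : X) :
  cauchy z ->
  (forall r N, 0 < r -> exists m, (N <= m)%nat /\ d (z m) p < r) ->
  converges z p.
Proof.
  intros Hz Hcl e He.
  destruct (Hz (e / 2) ltac:(lra)) as [N HN]. exists N. intros n Hn.
  destruct (Hcl (e / 2) N ltac:(lra)) as [m [Hm Hmp]].
  specialize (HN n m Hn Hm).
  pose proof (dist_triangle (z n) (z m) p). lra.
Qed.

Record avoided_ball (z : nat -> X) := {
  ab_center : X;
  ab_radius : R;
  ab_index : nat;
  ab_radius_pos : 0 < ab_radius;
  ab_avoided : forall m, (ab_index <= m)%nat -> ab_radius <= d (z m) ab_center }.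

Lemma compact_cauchy_converges (z : nat -> X) :
  m_compact d -> cauchy z -> exists p, converges z p.
Proof.
  intros Hc Hz. apply NNPP. intro Hno.
  (* Otherwise every point has a ball that the sequence eventually avoids, and a single
     term beyond all indices of a finite subcover lies in none of its balls. *)
  assert (Havoid : forall y, exists r N, 0 < r /\ forall m, (N <= m)%nat -> r <= d (z m) y).
  { intro y. apply NNPP. intro Hy. apply Hno. exists y.
    apply cauchy_cluster_converges; [exact Hz|]. intros r N Hr.
    apply NNPP. intro Hm. apply Hy. exists r, N. split; [exact Hr|].
    intros m HNm. apply Rnot_lt_le. intro Hlt. apply Hm. exists m. auto. }
  destruct (Hc (avoided_ball z) (fun b u => d (ab_center z b) u < ab_radius z b)) as [l Hl].
  - intros b u Hu. exists (ab_radius z b - d (ab_center z b) u). split; [lra|].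
    intros v Hv. pose proof (dist_triangle (ab_center z b) u v). lra.
  - intro u. destruct (Havoid u) as [r [N [Hr HN]]].
    exists (Build_avoided_ball z u r N Hr HN). simpl. rewrite dist_refl. exact Hr.
  - destruct (list_upper_bound (ab_index z) l) as [M HM].
    destruct (Hl (z M)) as [b [Hb Hin]].
    pose proof (ab_avoided z b M (HM b Hb)). rewrite dist_sym in Hin. lra.
Qed.

Lemma converges_dist_le (a : X) (z : nat -> X) (p : X) (B : R) :
  converges z p -> (forall n, d a (z n) <= B) -> d a p <= B.
Proof.
  intros Hz HB. apply Rnot_lt_le. intro Hlt.
  destruct (Hz (d a p - B) ltac:(lra)) as [N HN].
  specialize (HN N (le_n N)). specialize (HB N).
  pose proof (dist_triangle a (z N) p). lra.
Qed.

Lemma converges_fixed_point (g : X -> X) (z : nat -> X) (p : X) :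
  m_continuous d g -> converges z p ->
  (forall e, 0 < e -> exists N, forall n, (N <= n)%nat -> d (g (z n)) (z n) < e) ->
  g p = p.
Proof.
  intros Hg Hz Hfix. apply Hd. apply NNPP. intro Hne.
  set (e := d (g p) p).
  assert (He : 0 < e)
    by (destruct (dist_nonneg (g p) p) as [h|h]; [exact h|now exfalso; apply Hne]).
  destruct (Hg p (e / 3) ltac:(lra)) as [eta [Heta Hcont]].
  destruct (Hz (Rmin eta (e / 3)) ltac:(apply Rmin_pos; lra)) as [N1 HN1].
  destruct (Hfix (e / 3) ltac:(lra)) as [N2 HN2].
  set (n := Nat.max N1 N2).
  specialize (HN1 n ltac:(lia)). specialize (HN2 n ltac:(lia)).
  pose proof (Rmin_l eta (e / 3)). pose proof (Rmin_r eta (e / 3)).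
  assert (Hgz : d (g p) (g (z n)) < e / 3) by (apply Hcont; rewrite dist_sym; lra).
  pose proof (dist_triangle (g p) (g (z n)) p).
  pose proof (dist_triangle (g (z n)) (z n) p).
  unfold e in *. lra.
Qed.

End Metric.

Lemma closed_chain_pseudo_orbit {X : Type} (d : X -> X -> R) (f : X -> X)
  (k : nat) (xs : nat -> X) (s : R) :
  (1 <= k)%nat -> xs k = xs 0%nat ->
  (forall i, (i < k)%nat -> d (f (xs i)) (xs (S i)) <= s) ->
  pseudo_orbit d f s (fun i => xs (i mod k)%nat).
Proof.
  intros Hk Hclosed Hchain i. cbv beta.
  assert (Hr : (i mod k < k)%nat) by (apply Nat.mod_upper_bound; lia).
  replace (S i mod k)%nat with (S (i mod k) mod k)%nat
    by (rewrite <- (Nat.add_1_r i), <- (Nat.add_1_r (i mod k)); apply Nat.Div0.add_mod_idemp_l).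
  replace (xs (S (i mod k) mod k)%nat) with (xs (S (i mod k))).
  - apply Hchain, Hr.
  - destruct (Nat.lt_ge_cases (S (i mod k)) k) as [Hlt|Hge].
    + rewrite (Nat.mod_small _ _ Hlt). reflexivity.
    + replace (S (i mod k)) with k by lia. rewrite Nat.Div0.mod_same. exact Hclosed.
Qed.

Section LipschitzShadowing.
Context {X : Type} {d : X -> X -> R} {f : X -> X} {L delta0 : R} (Hd : is_metric d).
Context (Hshadow : forall delta, 0 < delta -> delta <= delta0 ->
  forall xs, pseudo_orbit d f delta xs -> exists x, shadows d f (L * delta) x xs).

Lemma shadow_closed_chain (k : nat) (xs : nat -> X) (s : R) :
  (1 <= k)%nat -> 0 < s -> s <= delta0 -> xs k = xs 0%nat ->
  (forall i, (i < k)%nat -> d (f (xs i)) (xs (S i)) <= s) ->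
  exists z, d z (xs 0%nat) <= L * s /\ d (Nat.iter k f z) z <= 2 * L * s.
Proof.
  intros Hk Hs Hs0 Hclosed Hchain.
  destruct (Hshadow s Hs Hs0 _ (closed_chain_pseudo_orbit d f k xs s Hk Hclosed Hchain))
    as [z Hz].
  pose proof (Hz 0%nat) as Hstart. pose proof (Hz k) as Hend. cbv beta in Hstart, Hend.
  rewrite Nat.Div0.mod_0_l in Hstart. rewrite Nat.Div0.mod_same in Hend.
  exists z. split; [exact Hstart|].
  pose proof (dist_triangle Hd (Nat.iter k f z) (xs 0%nat) z).
  rewrite (dist_sym Hd (xs 0%nat) z) in *. simpl in Hstart. lra.
Qed.

Lemma almost_periodic_shadow (k : nat) (y : X) (s : R) :
  (1 <= k)%nat -> 0 < s -> s <= delta0 -> d (Nat.iter k f y) y <= s ->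
  exists y', d y' y <= L * s /\ d (Nat.iter k f y') y' <= 2 * L * s.
Proof.
  intros Hk Hs Hs0 Hy.
  set (xs := fun i => if (i <? k)%nat then Nat.iter i f y else y).
  assert (Hxs0 : xs 0%nat = y) by (unfold xs; destruct (Nat.ltb_spec 0 k); reflexivity).
  rewrite <- Hxs0. apply (shadow_closed_chain k xs s Hk Hs Hs0).
  - unfold xs. rewrite Nat.ltb_irrefl. symmetry. exact Hxs0.
  - intros i Hi. unfold xs.
    destruct (Nat.ltb_spec i k) as [_|]; [|lia].
    change (f (Nat.iter i f y)) with (Nat.iter (S i) f y).
    destruct (Nat.ltb_spec (S i) k) as [_|Hge].
    + rewrite (dist_refl Hd). lra.
    + replace (S i) with k by lia. exact Hy.
Qed.

Lemma almost_periodic_near_periodic (k : nat) (y : X) (s : R) :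
  0 < L < 1 / 2 -> m_compact d -> m_continuous d f ->
  (1 <= k)%nat -> 0 < s -> s <= delta0 -> d (Nat.iter k f y) y <= s ->
  exists p, Nat.iter k f p = p /\ d y p <= L * s / (1 - 2 * L).
Proof.
  intros HL Hc Hf Hk Hs Hs0 Hy.
  set (q := 2 * L). assert (Hq : 0 < q < 1) by (unfold q; lra).
  assert (Hq' : 0 <= q < 1) by lra.
  destruct (dependent_choice_seq
              (fun n a => d (Nat.iter k f a) a <= s * q ^ n)
              (fun n a a' => d a a' <= L * s * q ^ n) y)
    as [z [Hz0 Hz]].
  - simpl. lra.
  - intros n a Ha.
    assert (Hqn : 0 < q ^ n) by (apply pow_lt; lra).
    assert (Hqn1 : q ^ n <= 1) by (rewrite <- (pow1 n); apply pow_incr; lra).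
    destruct (almost_periodic_shadow k a (s * q ^ n) Hk) as [a' [Hnear Hper]];
      [nra|nra|exact Ha|].
    exists a'. split.
    + simpl. replace (s * (q * q ^ n)) with (2 * L * (s * q ^ n)) by (unfold q; ring).
      exact Hper.
    + rewrite (dist_sym Hd). lra.
  - assert (Hstep : forall n, d (z n) (z (S n)) <= L * s * q ^ n) by apply Hz.
    destruct (compact_cauchy_converges Hd z Hc
                (geometric_cauchy Hd z (L * s) q ltac:(nra) Hq' Hstep)) as [p Hp].
    exists p. split.
    + apply (converges_fixed_point Hd _ z p (iter_continuous d f Hf k) Hp).
      intros e He. destruct (pow_eventually_lt q (e / s) Hq') as [N HN].
      { apply Rdiv_lt_0_compat; lra. }
      exists N. intros n Hn. eapply Rle_lt_trans; [apply Hz|].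
      specialize (HN n Hn). apply (Rmult_lt_compat_l s) in HN; [|exact Hs].
      replace (s * (e / s)) with e in HN by (field; lra). exact HN.
    + rewrite <- Hz0. apply (converges_dist_le Hd _ z p _ Hp). intro n.
      pose proof (geometric_tail_bound Hd z (L * s) q ltac:(nra) Hq' Hstep 0 n) as Hb.
      simpl in Hb. rewrite Rmult_1_r in Hb. exact Hb.
Qed.

End LipschitzShadowing.

Lemma CR_sub_closure_Per (X : Type) (d : X -> X -> R) (f : X -> X) (L : R) (x : X) :
  is_metric d -> m_compact d -> m_continuous d f -> 0 < L < 1 / 2 ->
  lipschitz_shadowing d f L -> CR d f x -> m_closure d (Per f) x.
Proof.
  intros Hd Hc Hf HL [delta0 [Hdelta0 Hshadow]] Hx eps Heps.
  set (delta := Rmin delta0 (eps * (1 - 2 * L))).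
  assert (Hdelta : 0 < delta) by (apply Rmin_pos; nra).
  assert (Hdelta0' : delta <= delta0) by apply Rmin_l.
  assert (Hsmall : L * delta / (1 - 2 * L) < eps).
  { assert (delta <= eps * (1 - 2 * L)) by apply Rmin_r.
    apply (Rmult_lt_reg_r (1 - 2 * L)); [lra|].
    replace (L * delta / (1 - 2 * L) * (1 - 2 * L)) with (L * delta) by (field; lra).
    nra. }
  destruct (Hx delta Hdelta) as [k [xs [Hk [Hstart [Hend Hchain]]]]].
  destruct (shadow_closed_chain Hd Hshadow k xs delta Hk Hdelta Hdelta0')
    as [z [Hzx Hzper]]; [congruence|exact Hchain|].
  rewrite Hstart in Hzx.
  destruct (almost_periodic_near_periodic Hd Hshadow k z (2 * L * delta))
    as [p [Hp Hzp]]; [lra|exact Hc|exact Hf|exact Hk|nra|nra|exact Hzper|].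
  exists p. split; [exists k; split; [lia|exact Hp]|].
  assert (Htotal : L * delta + L * (2 * L * delta) / (1 - 2 * L) = L * delta / (1 - 2 * L))
    by (field; lra).
  pose proof (dist_triangle Hd x z p).
  rewrite (dist_sym Hd x z) in *. lra.
Qed.

Lemma closure_Per_sub_CR (X : Type) (d : X -> X -> R) (f : X -> X) (x : X) :
  is_metric d -> m_continuous d f -> m_closure d (Per f) x -> CR d f x.
Proof.
  intros Hd Hf Hx delta Hdelta.
  destruct (Hf x (delta / 2) ltac:(lra)) as [eta [Heta Hcont]].
  destruct (Hx (Rmin eta (delta / 2)) ltac:(apply Rmin_pos; lra))
    as [y [[n [Hn Hy]] Hxy]].
  pose proof (Rmin_l eta (delta / 2)). pose proof (Rmin_r eta (delta / 2)).
  set (xs := fun i => if ((0 <? i)%nat && (i <? n)%nat)%bool then Nat.iter i f y else x).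
  assert (Hbefore : forall i, (i < n)%nat -> d (f (xs i)) (Nat.iter (S i) f y) < delta / 2).
  { intros i Hi. unfold xs.
    destruct (Nat.ltb_spec 0 i), (Nat.ltb_spec i n); try lia; simpl.
    - rewrite (dist_refl Hd). lra.
    - replace i with 0%nat by lia. apply Hcont. simpl. lra. }
  assert (Hafter : forall i, (i < n)%nat -> d (xs (S i)) (Nat.iter (S i) f y) < delta / 2).
  { intros i Hi. unfold xs.
    destruct (Nat.ltb_spec 0 (S i)), (Nat.ltb_spec (S i) n); try lia; cbn [andb].
    - rewrite (dist_refl Hd). lra.
    - replace (S i) with n by lia. rewrite Hy. lra. }
  exists n, xs. repeat split; [lia| |].
  - unfold xs. destruct (Nat.ltb_spec 0 n), (Nat.ltb_spec n n); [lia|reflexivity..].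
  - intros i Hi. specialize (Hbefore i Hi). specialize (Hafter i Hi).
    pose proof (dist_triangle Hd (f (xs i)) (Nat.iter (S i) f y) (xs (S i))).
    rewrite (dist_sym Hd (Nat.iter (S i) f y)) in *. lra.
Qed.

Theorem theorem1p2 (X : Type) (d : X -> X -> R) (f : X -> X) (L : R) :
  is_metric d -> m_compact d -> m_continuous d f ->
  0 < L -> L < 1 / 2 ->
  lipschitz_shadowing d f L ->
  forall x : X, CR d f x <-> m_closure d (Per f) x.
Proof.
  intros Hd Hc Hf HL HL2 Hshadow x. split.
  - apply CR_sub_closure_Per with L; auto.
  - apply closure_Per_sub_CR; assumption.
Qed.
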